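(* Let $r\in(0,1]$ and let $(\psi(k))_{k\in\mathbb{N}}$ be a positive nonincreasing sequence for which there exists $\varepsilon>0$ such that the sequence $k^{r+\varepsilon}\psi(k)$ is almost decreasing. Then there is a constant $K$, depending on $\psi$ and $r$, such that for all $n\in\mathbb{N}$ $$\psi(n)\,n^{r}\le\sum_{k=n}^{\infty}\Delta\psi(k)\,k^{r}\le K\,\psi(n)\,n^{r}.$$
   Context: $\Delta\psi(k)=\psi(k)-\psi(k+1)$. A sequence $(a_k)$ is almost decreasing if there is a constant $K_1>0$ such that $a_{k_1}\le K_1 a_{k_2}$ for all $k_1>k_2\ge1$. *)

From Stdlib Require Import Reals.
From Coquelicot Require Import Coquelicot.
Open Scope R_scope.

Definition Dpsi (psi : nat -> R) (k : nat) : R := psi k - psi (S k).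

Definition almost_decreasing (a : nat -> R) : Prop :=
  exists K1 : R, 0 < K1 /\
    forall k1 k2 : nat, (1 <= k2)%nat -> (k2 < k1)%nat -> a k1 <= K1 * a k2.

(* Summation by parts turns the sum into psi(n) n^r plus a sum of terms
   psi(k+1) ((k+1)^r - k^r).  Writing psi(k+1) = (k+1)^{-(r+eps)} P_{k+1} with
   P_{k+1} <= K1 P_n, where P_k = k^{r+eps} psi(k), each such term is at most
   (K1 r / eps) P_n (k^{-eps} - (k+1)^{-eps}), which telescopes to
   (K1 r / eps) psi(n) n^r.  The same bound on P forces psi(k) -> 0, and since
   k^r >= n^r the sum is at least n^r (psi(n) - lim psi) = psi(n) n^r. *)

From Stdlib Require Import Reals Lra Lia.
From Coquelicot Require Import Coquelicot.
Open Scope R_scope.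

Lemma one_sub_exp_neg_le (r eps d : R) : 0 <= r -> 0 < eps -> 0 <= d ->
  1 - exp (- (r * d)) <= r / eps * (exp (eps * d) - 1).
Proof.
  intros r_ge0 eps_gt0 d_ge0.
  pose proof (exp_ineq1_le (- (r * d))) as exp_rd.
  pose proof (exp_ineq1_le (eps * d)) as exp_epsd.
  apply Rle_trans with (r / eps * (eps * d)).
  - replace (r / eps * (eps * d)) with (r * d) by (field; lra). lra.
  - apply Rmult_le_compat_l; [apply Rdiv_le_0_compat|]; lra.
Qed.

(* With d = ln x - ln y this is [one_sub_exp_neg_le] scaled by x^{-eps}. *)
Lemma Rpower_increment_le (x y r eps : R) : 0 < y <= x -> 0 <= r -> 0 < eps ->
  (Rpower x r - Rpower y r) * Rpower x (- (r + eps))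
    <= r / eps * (Rpower y (- eps) - Rpower x (- eps)).
Proof.
  intros [y_gt0 y_le_x] r_ge0 eps_gt0. unfold Rpower.
  assert (ln_le : ln y <= ln x).
  { destruct (Req_dec y x) as [->|y_ne_x]; [lra|].
    left; apply ln_increasing; lra. }
  set (E := exp (- eps * ln x)).
  set (d := ln x - ln y).
  replace ((exp (r * ln x) - exp (r * ln y)) * exp (- (r + eps) * ln x))
    with (E * (1 - exp (- (r * d)))); cycle 1.
  { unfold E, d; rewrite Rmult_minus_distr_r, Rmult_minus_distr_l, Rmult_1_r, <- !exp_plus.
    f_equal; f_equal; ring. }
  replace (exp (- eps * ln y) - E) with (E * (exp (eps * d) - 1)); cycle 1.
  { unfold E, d; rewrite Rmult_minus_distr_l, Rmult_1_r, <- exp_plus. f_equal; f_equal; ring. }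
  replace (r / eps * (E * (exp (eps * d) - 1)))
    with (E * (r / eps * (exp (eps * d) - 1))) by ring.
  apply Rmult_le_compat_l; [left; apply exp_pos|].
  apply one_sub_exp_neg_le; unfold d; lra.
Qed.

Lemma Rpower_weighted_increment_le (x y p r eps A : R) :
  0 < y <= x -> 0 <= r -> 0 < eps -> 0 <= p -> Rpower x (r + eps) * p <= A ->
  p * (Rpower x r - Rpower y r) <= A * r / eps * (Rpower y (- eps) - Rpower x (- eps)).
Proof.
  intros yx r_ge0 eps_gt0 p_ge0 P_le_A.
  assert (x_gt0 : 0 < x) by lra.
  assert (incr_ge0 : 0 <= (Rpower x r - Rpower y r) * Rpower x (- (r + eps))).
  { apply Rmult_le_pos; [|left; apply exp_pos].
    pose proof (Rle_Rpower_l y x r r_ge0 yx); lra. }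
  assert (A_ge0 : 0 <= A).
  { apply Rle_trans with (Rpower x (r + eps) * p); [|exact P_le_A].
    apply Rmult_le_pos; [left; apply exp_pos | exact p_ge0]. }
  replace (p * (Rpower x r - Rpower y r))
    with (Rpower x (r + eps) * p * ((Rpower x r - Rpower y r) * Rpower x (- (r + eps)))); cycle 1.
  { replace p with (Rpower x (r + eps) * Rpower x (- (r + eps)) * p) at 2; [ring|].
    rewrite <- Rpower_plus, Rplus_opp_r, Rpower_O by exact x_gt0; ring. }
  apply Rle_trans with (A * ((Rpower x r - Rpower y r) * Rpower x (- (r + eps)))).
  - apply Rmult_le_compat_r; assumption.
  - unfold Rdiv; rewrite !Rmult_assoc; apply Rmult_le_compat_l; [exact A_ge0|].
    rewrite <- Rmult_assoc; apply Rpower_increment_le; assumption.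
Qed.

Section Summation_by_parts.

Variables (psi X : nat -> R) (n : nat).

Let a (j : nat) : R := Dpsi psi (n + j) * X (n + j).

Lemma sum_Dpsi_lower (N : nat) :
  (forall k, (n <= k)%nat -> psi (S k) <= psi k) ->
  (forall k, (n <= k)%nat -> X n <= X k) ->
  X n * (psi n - psi (S (n + N))) <= sum_n a N.
Proof.
  intros psi_dec X_ge. induction N as [|N IH].
  - rewrite sum_O; unfold a, Dpsi; rewrite Nat.add_0_r; lra.
  - rewrite sum_Sn; unfold plus; simpl; unfold a at 2, Dpsi.
    replace (n + S N)%nat with (S (n + N)) by lia.
    assert (Dpsi_ge0 : 0 <= psi (S (n + N)) - psi (S (S (n + N)))).
    { pose proof (psi_dec (S (n + N)) ltac:(lia)); lra. }
    pose proof (Rmult_le_compat_l _ _ _ Dpsi_ge0 (X_ge (S (n + N)) ltac:(lia))).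
    lra.
Qed.

(* Abel summation: the partial sum equals
   psi n X n - psi (n+N+1) X (n+N) + sum of psi (m+1) (X (m+1) - X m). *)
Lemma sum_Dpsi_upper (Y : nat -> R) (c : R) (N : nat) :
  (forall m, (n <= m)%nat -> psi (S m) * (X (S m) - X m) <= c * (Y m - Y (S m))) ->
  sum_n a N + psi (S (n + N)) * X (n + N)%nat <= psi n * X n + c * (Y n - Y (n + N)%nat).
Proof.
  intros step. induction N as [|N IH].
  - rewrite sum_O; unfold a, Dpsi; rewrite Nat.add_0_r; lra.
  - rewrite sum_Sn; unfold plus; simpl; unfold a at 2, Dpsi.
    replace (n + S N)%nat with (S (n + N)) by lia.
    pose proof (step (n + N)%nat ltac:(lia)). lra.
Qed.

End Summation_by_parts.

Lemma is_series_of_bounded_nonneg (a : nat -> R) (M : R) :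
  (forall j, 0 <= a j) -> (forall N, sum_n a N <= M) -> ex_series a.
Proof.
  intros a_ge0 bounded.
  apply (ex_finite_lim_seq_incr (sum_n a) M); [|exact bounded].
  intros N; rewrite sum_Sn; unfold plus; simpl; pose proof (a_ge0 (S N)); lra.
Qed.

Lemma is_lim_seq_Rpower_INR (s : R) : 0 < s ->
  is_lim_seq (fun m => Rpower (INR m) s) p_infty.
Proof.
  intros s_gt0.
  assert (ln_INR : is_lim_seq (fun m => ln (INR m)) p_infty).
  { apply (is_lim_comp_seq ln INR p_infty p_infty is_lim_ln_p); [|exact is_lim_seq_INR].
    exists 0%nat; discriminate. }
  apply (is_lim_comp_seq exp (fun m => s * ln (INR m)) p_infty p_infty is_lim_exp_p).
  - exists 0%nat; discriminate.
  - apply (is_lim_seq_mult (fun _ => s) _ s p_infty); [apply is_lim_seq_const|exact ln_INR|].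
    apply is_Rbar_mult_sym, is_Rbar_mult_p_infty_pos; simpl; lra.
Qed.

Lemma is_lim_seq_0_of_Rpower_bound (u : nat -> R) (s A : R) (n : nat) : 0 < s ->
  (forall m, (n < m)%nat -> 0 <= u m /\ Rpower (INR m) s * u m <= A) ->
  is_lim_seq u 0.
Proof.
  intros s_gt0 bound.
  apply (is_lim_seq_le_le_loc (fun _ => 0) u (fun m => A * / Rpower (INR m) s)).
  - exists (S n); intros m m_gt_n.
    destruct (bound m ltac:(lia)) as [u_ge0 Pu_le].
    assert (pow_gt0 : 0 < Rpower (INR m) s) by apply exp_pos.
    split; [exact u_ge0|].
    apply (Rmult_le_reg_l (Rpower (INR m) s)); [exact pow_gt0|].
    replace (Rpower (INR m) s * (A * / Rpower (INR m) s)) with A by (field; lra).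
    exact Pu_le.
  - apply is_lim_seq_const.
  - replace (Finite 0) with (Rbar_mult A (Rbar_inv p_infty)) by (simpl; f_equal; ring).
    apply is_lim_seq_scal_l, is_lim_seq_inv; [apply is_lim_seq_Rpower_INR, s_gt0|discriminate].
Qed.

Section Almost_decreasing_weight.

Variables (r eps K1 : R) (psi : nat -> R) (n : nat).
Hypotheses (r_gt0 : 0 < r) (eps_gt0 : 0 < eps) (n_ge1 : (1 <= n)%nat)
  (psi_pos : forall k, (n <= k)%nat -> 0 < psi k)
  (psi_dec : forall k, (n <= k)%nat -> psi (S k) <= psi k)
  (weighted_psi_le : forall m, (n < m)%nat ->
     Rpower (INR m) (r + eps) * psi m <= K1 * (Rpower (INR n) (r + eps) * psi n)).

Let a (j : nat) : R := Dpsi psi (n + j) * Rpower (INR (n + j)) r.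

Let A : R := K1 * (Rpower (INR n) (r + eps) * psi n).

Let INR_gt0 (k : nat) : (n <= k)%nat -> 0 < INR k.
Proof. intros; apply lt_0_INR; lia. Qed.

Lemma Dpsi_Rpower_ge0 (j : nat) : 0 <= a j.
Proof.
  apply Rmult_le_pos; [|left; apply exp_pos].
  unfold Dpsi; pose proof (psi_dec (n + j)%nat ltac:(lia)); lra.
Qed.

Lemma sum_Dpsi_Rpower_ge (N : nat) :
  Rpower (INR n) r * (psi n - psi (S (n + N))) <= sum_n a N.
Proof.
  apply (sum_Dpsi_lower psi (fun k => Rpower (INR k) r)).
  - intros k k_ge_n; apply psi_dec, k_ge_n.
  - intros k k_ge_n; apply Rle_Rpower_l; [lra|].
    split; [apply INR_gt0; lia|apply le_INR, k_ge_n].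
Qed.

Lemma sum_Dpsi_Rpower_le (N : nat) :
  sum_n a N <= (1 + K1 * r / eps) * (psi n * Rpower (INR n) r).
Proof.
  assert (A_ge0 : 0 <= A).
  { apply Rle_trans with (Rpower (INR (S n)) (r + eps) * psi (S n)); [|apply weighted_psi_le; lia].
    apply Rmult_le_pos; [left; apply exp_pos|left; apply psi_pos; lia]. }
  assert (A_Y : A * r / eps * Rpower (INR n) (- eps) = K1 * r / eps * (psi n * Rpower (INR n) r)).
  { unfold A; replace (Rpower (INR n) r) with (Rpower (INR n) (r + eps + - eps)) by (f_equal; ring).
    rewrite (Rpower_plus (r + eps)); field; lra. }
  assert (tail_ge0 : 0 <= psi (S (n + N)) * Rpower (INR (n + N)) r).
  { apply Rmult_le_pos; [left; apply psi_pos; lia|left; apply exp_pos]. }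
  assert (Y_ge0 : 0 <= A * r / eps * Rpower (INR (n + N)) (- eps)).
  { apply Rmult_le_pos; [|left; apply exp_pos].
    apply Rdiv_le_0_compat; [apply Rmult_le_pos|]; lra. }
  enough (sum_n a N + psi (S (n + N)) * Rpower (INR (n + N)) r
          <= psi n * Rpower (INR n) r
             + A * r / eps * (Rpower (INR n) (- eps) - Rpower (INR (n + N)) (- eps)))
    by nra.
  apply (sum_Dpsi_upper psi (fun k => Rpower (INR k) r) n (fun k => Rpower (INR k) (- eps))).
  intros m m_ge_n; apply Rpower_weighted_increment_le; try lra.
  - split; [apply INR_gt0; lia|apply le_INR; lia].
  - left; apply psi_pos; lia.
  - apply weighted_psi_le; lia.
Qed.

Lemma psi_cvg0 : is_lim_seq psi 0.
Proof.
  apply (is_lim_seq_0_of_Rpower_bound psi (r + eps) A n); [lra|].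
  intros m m_gt_n; split; [left; apply psi_pos; lia|apply weighted_psi_le, m_gt_n].
Qed.

Lemma ex_series_Dpsi_Rpower : ex_series a.
Proof.
  exact (is_series_of_bounded_nonneg a _ Dpsi_Rpower_ge0 sum_Dpsi_Rpower_le).
Qed.

Lemma is_series_Dpsi_Rpower_bounds (l : R) : is_series a l ->
  psi n * Rpower (INR n) r <= l <= (1 + K1 * r / eps) * (psi n * Rpower (INR n) r).
Proof.
  intros a_sum.
  assert (sums_to_l : is_lim_seq (sum_n a) l) by exact a_sum.
  assert (lower_lim : is_lim_seq (fun N => Rpower (INR n) r * (psi n - psi (S (n + N))))
                                 (Rpower (INR n) r * (psi n - 0))).
  { apply (is_lim_seq_scal_l _ _ (psi n - 0)), is_lim_seq_minus'; [apply is_lim_seq_const|].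
    apply (is_lim_seq_ext (fun N => psi (N + S n)%nat)); [intros N; f_equal; lia|].
    apply is_lim_seq_incr_n, psi_cvg0. }
  pose proof (is_lim_seq_le _ _ _ _ sum_Dpsi_Rpower_ge lower_lim sums_to_l) as lower.
  pose proof (is_lim_seq_le _ _ _ _ sum_Dpsi_Rpower_le sums_to_l (is_lim_seq_const _)) as upper.
  simpl in lower, upper; lra.
Qed.

End Almost_decreasing_weight.

Theorem lemma1 (r : R) (psi : nat -> R) :
  0 < r <= 1 ->
  (forall k : nat, (1 <= k)%nat -> 0 < psi k) ->
  (forall k : nat, (1 <= k)%nat -> psi (S k) <= psi k) ->
  (exists eps : R, 0 < eps /\
     almost_decreasing (fun k => Rpower (INR k) (r + eps) * psi k)) ->
  exists K : R,
    forall n : nat, (1 <= n)%nat ->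
      ex_series (fun j : nat => Dpsi psi (n + j) * Rpower (INR (n + j)) r) /\
      psi n * Rpower (INR n) r
        <= Series (fun j : nat => Dpsi psi (n + j) * Rpower (INR (n + j)) r) /\
      Series (fun j : nat => Dpsi psi (n + j) * Rpower (INR (n + j)) r)
        <= K * (psi n * Rpower (INR n) r).
Proof.
  (* The argument works for every r > 0. *)
  intros [r_gt0 _] psi_pos psi_dec [eps [eps_gt0 [K1 [_ psi_AD]]]].
  exists (1 + K1 * r / eps); intros n n_ge1.
  assert (psi_pos_n : forall k, (n <= k)%nat -> 0 < psi k) by (intros; apply psi_pos; lia).
  assert (psi_dec_n : forall k, (n <= k)%nat -> psi (S k) <= psi k) by (intros; apply psi_dec; lia).
  assert (psi_AD_n : forall m, (n < m)%nat ->
    Rpower (INR m) (r + eps) * psi m <= K1 * (Rpower (INR n) (r + eps) * psi n))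
    by (intros; apply psi_AD; lia).
  assert (summable : ex_series (fun j => Dpsi psi (n + j) * Rpower (INR (n + j)) r))
    by (apply (ex_series_Dpsi_Rpower r eps K1 psi n); assumption).
  destruct summable as [l a_sum].
  rewrite (is_series_unique _ l a_sum).
  split; [exists l; exact a_sum|].
  apply (is_series_Dpsi_Rpower_bounds r eps K1 psi n); assumption.
Qed.
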